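(* Let $\mathbf{T}\subset\mathbb{S}^3$ be a $\mathbb{Z}_2$-symmetric spherical tetrahedron with dihedral angles $A$, $B=E$, $C=F$, $D$ and edge lengths $l_A$, $l_B=l_E$, $l_C=l_F$, $l_D$. Then: (i) $l_A=l_D$ if and only if $A=D$; (ii) $l_A>l_D$ if and only if $A<D$.
   Context: A spherical tetrahedron $\mathbf{T}\subset\mathbb{S}^3=\{x\in\mathbb{R}^4:\langle x,x\rangle=1\}$ is the intersection of $\mathbb{S}^3$ with the cone $\{\sum_{i=0}^3\lambda_i\mathrm{p}_i:\lambda_i\ge 0\}$ over four linearly independent unit vectors $\mathrm{p}_0,\dots,\mathrm{p}_3$ (its vertices). Edge lengths $l_{ij}\in[0,\pi]$ are given by $\cos l_{ij}=\langle \mathrm{p}_i,\mathrm{p}_j\rangle$; if $\mathrm{v}_i$ is the outer unit normal to the face opposite $\mathrm{p}_i$, the dihedral angle $\alpha_{ij}\in[0,\pi]$ between faces $i$ and $j$ satisfies $\cos\alpha_{ij}=-\langle \mathrm{v}_i,\mathrm{v}_j\rangle$. Notation: $l_A=l_{01}$, $l_B=l_{02}$, $l_C=l_{03}$, $l_D=l_{23}$, $l_E=l_{13}$, $l_F=l_{12}$, and $A,B,C,D,E,F$ denote the dihedral angles along the edges of lengths $l_A,\dots,l_F$ respectively. $\mathbf{T}$ is called $\mathbb{Z}_2$-symmetric if it is invariant under the rotation through angle $\pi$ about the axis through the midpoints of the edges $\mathrm{p}_0\mathrm{p}_1$ and $\mathrm{p}_2\mathrm{p}_3$; in that case $l_B=l_E$,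 $l_C=l_F$, $B=E$, $C=F$. *)

From HB Require Import structures.
From mathcomp Require Import all_boot all_order all_algebra.
From mathcomp Require Import all_classical all_reals all_analysis.
Set Implicit Arguments. Unset Strict Implicit. Unset Printing Implicit Defensive.
Import Order.TTheory GRing.Theory Num.Theory.
Local Open Scope ring_scope.
Local Open Scope classical_set_scope.

Definition o0 : 'I_4 := @Ordinal 4 0 isT.
Definition o1 : 'I_4 := @Ordinal 4 1 isT.
Definition o2 : 'I_4 := @Ordinal 4 2 isT.
Definition o3 : 'I_4 := @Ordinal 4 3 isT.

Section Tetra.
Variable R : realType.

Definition dot4 (x y : 'rV[R]_4) : R := \sum_(k < 4) x 0 k * y 0 k.

Definition is_tetra_vertices (p : 'I_4 -> 'rV[R]_4) : Prop :=
  (forall i, dot4 (p i) (p i) = 1) /\ row_free (\matrix_(i < 4) p i).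

Definition tetra (p : 'I_4 -> 'rV[R]_4) : set 'rV[R]_4 :=
  [set x | dot4 x x = 1 /\
     exists lam : 'I_4 -> R, (forall i, 0 <= lam i) /\ x = \sum_(i < 4) lam i *: p i].

Definition outer_normals (p v : 'I_4 -> 'rV[R]_4) : Prop :=
  forall i, dot4 (v i) (v i) = 1 /\ (forall j, j != i -> dot4 (v i) (p j) = 0)
            /\ dot4 (v i) (p i) < 0.

Definition edge_len (p : 'I_4 -> 'rV[R]_4) (i j : 'I_4) : R := acos (dot4 (p i) (p j)).
Definition dihedral (v : 'I_4 -> 'rV[R]_4) (i j : 'I_4) : R := acos (- dot4 (v i) (v j)).

(* the rotation through angle pi about the great circle through the midpoints of
   p0p1 and p2p3: the linear map fixing span(p0+p1, p2+p3) pointwise and acting as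
   -id on its orthogonal complement; T is Z2-symmetric if it is invariant under it *)
Definition is_half_turn (p : 'I_4 -> 'rV[R]_4) (f : 'M[R]_4) : Prop :=
  (p o0 + p o1) *m f = p o0 + p o1 /\ (p o2 + p o3) *m f = p o2 + p o3 /\
  (forall y : 'rV[R]_4, dot4 y (p o0 + p o1) = 0 -> dot4 y (p o2 + p o3) = 0 ->
      y *m f = - y).

Definition Z2_symmetric (p : 'I_4 -> 'rV[R]_4) : Prop :=
  exists f : 'M[R]_4, is_half_turn p f /\ [set x *m f | x in tetra p] = tetra p.

(* l_A = l_01, l_D = l_23; A = dihedral angle along edge p0p1, which lies between
   faces 2 and 3 (opposite p2, p3); D = dihedral angle along p2p3 (faces 0 and 1) *)
Definition l_A p := edge_len p o0 o1.
Definition l_D p := edge_len p o2 o3.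
Definition ang_A v := dihedral v o2 o3.
Definition ang_D v := dihedral v o0 o1.

End Tetra.

From HB Require Import structures.
From mathcomp Require Import all_boot all_order all_algebra.
From mathcomp Require Import all_classical all_reals all_analysis.
From mathcomp Require Import ring lra.
Import Order.TTheory GRing.Theory Num.Theory.
Set Implicit Arguments. Unset Strict Implicit.
Local Open Scope ring_scope.

(* The half-turn f fixes p0 + p1 and p2 + p3 and is -1 on their orthogonal complement, so it
   is an involution.  As it maps the cone over the vertices onto itself, f p0 and f p1 are
   nonnegative combinations of vertices summing to p0 + p1; being an involution, f must then
   exchange p0 and p1 (fixing them would put p0 - p1 in span(p0 + p1, p2 + p3)), and likewise
   p2 and p3.  Hence p0 - p1 and p2 - p3 are anti-fixed, i.e. orthogonal to p0 + p1 and
   p2 + p3, and the Gram matrix takes the shape [Z2_gram a b c d] with a = cos l_A and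
   d = cos l_D.  The outer normals are negative multiples of the dual basis, which is read off
   from the explicit inverse [Z2_gram_dual] of that matrix; this gives
     X0 X2 (cos A - cos D) = 4 Dp Dm (d - a)
   with X0, X2 > 0 and Gram determinants Dp, Dm > 0.  As acos is decreasing, l_A - l_D and
   D - A have the same sign. *)

Lemma ord4P (j : 'I_4) : j = o0 \/ j = o1 \/ j = o2 \/ j = o3.
Proof.
case: j => [[|[|[|[|k]]]] Hk] //.
- by left; apply/val_inj.
- by right; left; apply/val_inj.
- by right; right; left; apply/val_inj.
- by right; right; right; apply/val_inj.
Qed.

Lemma sum4 (V : zmodType) (F : 'I_4 -> V) :
  \sum_(i < 4) F i = F o0 + F o1 + F o2 + F o3.
Proof.
rewrite !big_ord_recl big_ord0 addr0 !addrA.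
by do 3 ?congr (_ + _); congr F; apply/val_inj.
Qed.

Section Dot4.
Variable R : realType.
Implicit Types x y z : 'rV[R]_4.

Lemma dot4C x y : dot4 x y = dot4 y x.
Proof. by apply: eq_bigr => k _; rewrite mulrC. Qed.

Lemma dot4Dl x y z : dot4 (x + y) z = dot4 x z + dot4 y z.
Proof. by rewrite /dot4 -big_split; apply: eq_bigr => k _; rewrite mxE mulrDl. Qed.

Lemma dot4Zl k x y : dot4 (k *: x) y = k * dot4 x y.
Proof. by rewrite /dot4 mulr_sumr; apply: eq_bigr => i _; rewrite mxE mulrA. Qed.

Lemma dot4Bl x y z : dot4 (x - y) z = dot4 x z - dot4 y z.
Proof. by rewrite -scaleN1r dot4Dl dot4Zl mulN1r. Qed.

Lemma dot4Dr x y z : dot4 x (y + z) = dot4 x y + dot4 x z.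
Proof. by rewrite dot4C dot4Dl !(dot4C x). Qed.

Lemma dot4Zr k x y : dot4 x (k *: y) = k * dot4 x y.
Proof. by rewrite dot4C dot4Zl dot4C. Qed.

Lemma dot4Br x y z : dot4 x (y - z) = dot4 x y - dot4 x z.
Proof. by rewrite dot4C dot4Bl !(dot4C x). Qed.

Lemma dot40l y : dot4 0 y = 0.
Proof. by rewrite -(scale0r 0) dot4Zl mul0r. Qed.

Lemma dot4_suml (I : finType) (F : I -> 'rV[R]_4) y :
  dot4 (\sum_i F i) y = \sum_i dot4 (F i) y.
Proof. by rewrite (big_morph (fun u => dot4 u y) (fun u w => dot4Dl u w y) (dot40l y)). Qed.

Lemma dot4_ge0 x : 0 <= dot4 x x.
Proof. by apply: sumr_ge0 => k _; apply: sqr_ge0. Qed.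

Lemma dot4_eq0 x : (dot4 x x == 0) = (x == 0).
Proof.
apply/eqP/eqP => [|->]; last exact: dot40l.
move/psumr_eq0P => x0; apply/rowP => k; rewrite mxE; apply/eqP.
by rewrite -sqrf_eq0 expr2 x0 // => i _; apply: sqr_ge0.
Qed.

Lemma dot4_gt0 x : (0 < dot4 x x) = (x != 0).
Proof. by rewrite lt0r dot4_eq0 dot4_ge0 andbT. Qed.

Lemma dot4_cauchy_schwarz_lt x y :
  (forall a b : R, a *: x + b *: y = 0 -> a = 0 /\ b = 0) ->
  dot4 x y ^+ 2 < dot4 x x * dot4 y y.
Proof.
move=> xy_free.
have y_gt0 : 0 < dot4 y y.
  rewrite dot4_gt0; apply/eqP => y0.
  by have [_] := xy_free 0 1 ltac:(by rewrite y0 scale0r scaler0 addr0); apply/eqP/oner_neq0.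
pose w := dot4 y y *: x - dot4 x y *: y.
have w_gt0 : 0 < dot4 w w.
  rewrite dot4_gt0; apply/eqP => w0.
  have [yy0 _] := xy_free (dot4 y y) (- dot4 x y) ltac:(by rewrite scaleNr -w0).
  by move: y_gt0; rewrite yy0 ltxx.
have ww : dot4 w w = dot4 y y * (dot4 x x * dot4 y y - dot4 x y ^+ 2).
  rewrite /w !(dot4Bl, dot4Br, dot4Zl, dot4Zr) (dot4C y x); ring.
by rewrite -subr_gt0 -(pmulr_rgt0 _ y_gt0) -ww.
Qed.

Lemma dot4_unit_bound x y : dot4 x x = 1 -> dot4 y y = 1 -> -1 <= dot4 x y <= 1.
Proof.
move=> x1 y1; have := dot4_ge0 (x - y); have := dot4_ge0 (x + y).
rewrite !(dot4Bl, dot4Br, dot4Dl, dot4Dr) x1 y1 (dot4C y x) => h1 h2.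
by apply/andP; split; lra.
Qed.

Lemma row_free_dot4_eq0 (p : 'I_4 -> 'rV[R]_4) x : row_free (\matrix_(i < 4) p i) ->
  (forall j, dot4 x (p j) = 0) -> x = 0.
Proof.
move=> p_free xp0; have p_unit : \matrix_(i < 4) p i \in unitmx by rewrite -row_free_unit.
have : (\matrix_(i < 4) p i) *m x^T = 0.
  apply/matrixP => i j; rewrite !mxE (ord1 j) -[RHS](xp0 i) dot4C.
  by apply: eq_bigr => k _; rewrite !mxE.
move/(congr1 (mulmx (invmx (\matrix_(i < 4) p i)))); rewrite mulKmx // mulmx0.
by move/(congr1 trmx); rewrite trmxK trmx0.
Qed.

End Dot4.

Section Free4.
Variables (R : fieldType) (n : nat).

Definition free4 (x0 x1 x2 x3 : 'rV[R]_n) : Prop := forall c0 c1 c2 c3 : R,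
  c0 *: x0 + c1 *: x1 + c2 *: x2 + c3 *: x3 = 0 -> [/\ c0 = 0, c1 = 0, c2 = 0 & c3 = 0].

Lemma free4_swap_pairs (x0 x1 x2 x3 : 'rV[R]_n) : free4 x0 x1 x2 x3 -> free4 x2 x3 x0 x1.
Proof.
move=> x_free c0 c1 c2 c3 E.
have [|-> -> -> ->] // := x_free c2 c3 c0 c1.
by rewrite -E; apply/rowP => k; rewrite !mxE; ring.
Qed.

Lemma row_free_free4 (p : 'I_4 -> 'rV[R]_n) :
  row_free (\matrix_(i < 4) p i) -> free4 (p o0) (p o1) (p o2) (p o3).
Proof.
move=> p_free c0 c1 c2 c3 E.
pose c := \row_(k < 4) [:: c0; c1; c2; c3]`_k.
have /(row_free_inj p_free)/rowP c0E : c *m \matrix_(i < 4) p i = 0 *m \matrix_(i < 4) p i.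
  by rewrite mul0mx mulmx_sum_row sum4 !rowK !mxE.
by have := c0E o0; have := c0E o1; have := c0E o2; have := c0E o3; rewrite !mxE.
Qed.

End Free4.

Section Cone4.
Variables (R : realFieldType) (n : nat).

Definition cone4 (x0 x1 x2 x3 y : 'rV[R]_n) : Prop := exists c0 c1 c2 c3 : R,
  [/\ 0 <= c0, 0 <= c1, 0 <= c2 & 0 <= c3] /\ y = c0 *: x0 + c1 *: x1 + c2 *: x2 + c3 *: x3.

Lemma cone4_swap_pairs (x0 x1 x2 x3 y : 'rV[R]_n) : cone4 x0 x1 x2 x3 y -> cone4 x2 x3 x0 x1 y.
Proof.
case=> c0 [c1 [c2 [c3 [[h0 h1 h2 h3] ->]]]]; exists c2, c3, c0, c1.
by split; [split | apply/rowP => k; rewrite !mxE; ring].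
Qed.

End Cone4.

Lemma stochastic_involution2 (R : realFieldType) (l0 l1 m0 m1 : R) :
  0 <= l0 -> 0 <= l1 -> 0 <= m0 -> 0 <= m1 -> l0 + m0 = 1 -> l1 + m1 = 1 ->
  l0 * l0 + l1 * m0 = 1 -> l0 * l1 + l1 * m1 = 0 ->
  (l0 = 1 /\ l1 = 0) \/ (l0 = 0 /\ l1 = 1).
Proof.
move=> l0_ge0 l1_ge0 m0_ge0 m1_ge0 s0 s1 e0 e1.
have [l1_0|l1_neq0] := eqVneq l1 0; first by left; split=> //; nra.
have l0m1 : l0 + m1 = 0 by apply: (mulfI l1_neq0); rewrite mulr0 mulrDr -e1; ring.
by right; nra.
Qed.

Section PairSwap.
Variables (R : realFieldType) (n : nat) (f : 'M[R]_n) (x0 x1 x2 x3 : 'rV[R]_n).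
Hypothesis x_free : free4 x0 x1 x2 x3.
Hypothesis f_invol : forall x : 'rV[R]_n, x *m f *m f = x.
Hypothesis f_sum : (x0 + x1) *m f = x0 + x1.
Hypothesis f_fixed : forall x : 'rV[R]_n, x *m f = x ->
  exists a b : R, x = a *: (x0 + x1) + b *: (x2 + x3).
Hypotheses (f_x0 : cone4 x0 x1 x2 x3 (x0 *m f)) (f_x1 : cone4 x0 x1 x2 x3 (x1 *m f)).

Lemma pair_swap : x0 *m f = x1 /\ x1 *m f = x0.
Proof.
have [l0 [l1 [l2 [l3 [[l0_ge0 l1_ge0 l2_ge0 l3_ge0] fx0]]]]] := f_x0.
have [m0 [m1 [m2 [m3 [[m0_ge0 m1_ge0 m2_ge0 m3_ge0] fx1]]]]] := f_x1.
have [s0 s1 s2 s3] : [/\ l0 + m0 - 1 = 0, l1 + m1 - 1 = 0, l2 + m2 = 0 & l3 + m3 = 0].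
  apply: x_free; rewrite -(subrr (x0 + x1)) -[X in _ = X - _]f_sum mulmxDl fx0 fx1.
  by apply/rowP => k; rewrite !mxE; ring.
have [l2_0 l3_0 m2_0 m3_0] : [/\ l2 = 0, l3 = 0, m2 = 0 & m3 = 0] by split; lra.
rewrite l2_0 l3_0 !scale0r !addr0 in fx0; rewrite m2_0 m3_0 !scale0r !addr0 in fx1.
have [e0 e1 _ _] : [/\ l0 * l0 + l1 * m0 - 1 = 0, l0 * l1 + l1 * m1 = 0, 0 = 0 :> R & 0 = 0 :> R].
  apply: x_free; rewrite -(subrr x0) -[X in _ = X - _](f_invol x0).
  rewrite fx0 mulmxDl -!scalemxAl fx0 fx1.
  by apply/rowP => k; rewrite !mxE; ring.
have [[l0_1 l1_0]|[l0_0 l1_1]] := stochastic_involution2 l0_ge0 l1_ge0 m0_ge0 m1_ge0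
   ltac:(lra) ltac:(lra) ltac:(lra) e1.
- have /f_fixed [a [b E]] : (x0 - x1) *m f = x0 - x1.
    have [m0_0 m1_1] : m0 = 0 /\ m1 = 1 by split; lra.
    by rewrite mulmxBl fx0 fx1 l0_1 l1_0 m0_0 m1_1 !scale0r !scale1r !add0r !addr0.
  suff [a1 a_1 _ _] : [/\ 1 - a = 0, - 1 - a = 0, - b = 0 & - b = 0] by exfalso; lra.
  apply: x_free.
  rewrite -(subrr (x0 - x1)) [X in _ = _ - X]E.
  by apply/rowP => k; rewrite !mxE; ring.
- have [m0_1 m1_0] : m0 = 1 /\ m1 = 0 by split; lra.
  by rewrite fx0 fx1 l0_0 l1_1 m0_1 m1_0 !scale0r !scale1r addr0 add0r.
Qed.

End PairSwap.

Section HalfTurn.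
Variables (R : realType) (s t : 'rV[R]_4) (f : 'M[R]_4).
Implicit Types y z : 'rV[R]_4.
Hypothesis st_free : forall a b : R, a *: s + b *: t = 0 -> a = 0 /\ b = 0.
Hypotheses (f_s : s *m f = s) (f_t : t *m f = t).
Hypothesis f_perp : forall y, dot4 y s = 0 -> dot4 y t = 0 -> y *m f = - y.

Let gram_det := dot4 s s * dot4 t t - dot4 s t ^+ 2.

Let gram_det_neq0 : gram_det != 0.
Proof. by rewrite subr_eq0 gt_eqF // dot4_cauchy_schwarz_lt. Qed.

Lemma half_turn_decomp y : exists a b z,
  gram_det *: y = a *: s + b *: t + z /\ [/\ dot4 z s = 0, dot4 z t = 0 & z *m f = - z].
Proof.
set a := dot4 y s * dot4 t t - dot4 y t * dot4 s t.
set b := dot4 y t * dot4 s s - dot4 y s * dot4 s t.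
set z := gram_det *: y - a *: s - b *: t.
have zs : dot4 z s = 0 by rewrite /z /gram_det /a /b !(dot4Bl, dot4Zl) (dot4C t s); ring.
have zt : dot4 z t = 0 by rewrite /z /gram_det /a /b !(dot4Bl, dot4Zl); ring.
exists a, b, z; split; last by split=> //; apply: f_perp.
by rewrite /z; apply/rowP => k; rewrite !mxE; ring.
Qed.

Let half_turn_span a b z : (a *: s + b *: t + z) *m f = a *: s + b *: t + z *m f.
Proof. by rewrite !mulmxDl -!scalemxAl f_s f_t. Qed.

Lemma half_turn_invol y : y *m f *m f = y.
Proof.
have [a [b [z [E [_ _ fz]]]]] := half_turn_decomp y.
apply: (scalerI gram_det_neq0).
by rewrite !scalemxAl E !half_turn_span fz mulNmx fz opprK.
Qed.

Lemma half_turn_fixed y : y *m f = y -> exists a b : R, y = a *: s + b *: t.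
Proof.
move=> fy; have [a [b [z [E [_ _ fz]]]]] := half_turn_decomp y.
have z0 : z = 0.
  have := congr1 (mulmx^~ f) E; rewrite /= -scalemxAl fy half_turn_span fz E.
  by move/rowP => zz; apply/rowP => k; have := zz k; rewrite !mxE => h; lra.
exists (gram_det^-1 * a), (gram_det^-1 * b).
apply: (scalerI gram_det_neq0); rewrite E z0 addr0 scalerDr !scalerA.
by rewrite !mulrA divff // !mul1r.
Qed.

Lemma half_turn_anti y : y *m f = - y -> dot4 y s = 0 /\ dot4 y t = 0.
Proof.
move=> fy; have [a [b [z [E [zs zt fz]]]]] := half_turn_decomp y.
have [a0 b0] : a = 0 /\ b = 0.
  suff [a0 b0] : a + a = 0 /\ b + b = 0 by split; lra.
  apply: st_free; have := congr1 (mulmx^~ f) E.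
  rewrite /= -scalemxAl fy half_turn_span fz scalerN E => /rowP EE.
  by apply/rowP => k; have := EE k; rewrite !mxE => h; lra.
rewrite a0 b0 !scale0r !add0r in E.
by split; apply/(mulfI gram_det_neq0); rewrite -dot4Zl E mulr0.
Qed.

End HalfTurn.

Section Z2Symmetry.
Variables (R : realType) (p : 'I_4 -> 'rV[R]_4) (f : 'M[R]_4).
Hypotheses (p_vert : is_tetra_vertices p) (f_half : is_half_turn p f).
Hypothesis f_tetra : [set x *m f | x in tetra p]%classic = tetra p.

Let p_free := row_free_free4 p_vert.2.

Let sum_free a b : a *: (p o0 + p o1) + b *: (p o2 + p o3) = 0 -> a = 0 /\ b = 0.
Proof.
move=> E; suff [a0 _ b0 _] : [/\ a = 0, a = 0, b = 0 & b = 0] by [].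
by apply: p_free; rewrite -E !scalerDr !addrA.
Qed.

Let f_invol := half_turn_invol sum_free f_half.1 f_half.2.1 f_half.2.2.
Let f_fixed := half_turn_fixed sum_free f_half.1 f_half.2.1 f_half.2.2.
Let f_anti := half_turn_anti sum_free f_half.1 f_half.2.1 f_half.2.2.

Lemma vertex_image_cone i : cone4 (p o0) (p o1) (p o2) (p o3) (p i *m f).
Proof.
have : tetra p (p i *m f).
  rewrite -f_tetra; exists (p i) => //; split; first exact: p_vert.1.
  exists (fun k => (k == i)%:R); split=> [k|]; first by rewrite ler0n.
  by rewrite (bigD1 i) //= eqxx scale1r big1 ?addr0 // => k /negbTE ->; rewrite scale0r.
case=> _ [lam [lam_ge0 ->]]; rewrite sum4.
by exists (lam o0), (lam o1), (lam o2), (lam o3).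
Qed.

Lemma Z2_symmetric_gram : dot4 (p o0) (p o2) = dot4 (p o1) (p o3) /\
                          dot4 (p o0) (p o3) = dot4 (p o1) (p o2).
Proof.
have [f0 f1] : p o0 *m f = p o1 /\ p o1 *m f = p o0.
  apply: pair_swap p_free f_invol f_half.1 _ _ _ => //; exact: vertex_image_cone.
have [f2 f3] : p o2 *m f = p o3 /\ p o3 *m f = p o2.
  apply: pair_swap (free4_swap_pairs p_free) f_invol f_half.2.1 _ _ _;
    try by apply: cone4_swap_pairs; apply: vertex_image_cone.
  by move=> x /f_fixed [a [b ->]]; exists b, a; rewrite addrC.
have [_ h1] : dot4 (p o0 - p o1) (p o0 + p o1) = 0 /\ dot4 (p o0 - p o1) (p o2 + p o3) = 0.
  by apply: f_anti; rewrite mulmxBl f0 f1 opprB.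
have [h2 _] : dot4 (p o2 - p o3) (p o0 + p o1) = 0 /\ dot4 (p o2 - p o3) (p o2 + p o3) = 0.
  by apply: f_anti; rewrite mulmxBl f2 f3 opprB.
move: h1 h2; rewrite !(dot4Bl, dot4Dr) (dot4C (p o2) (p o0)) (dot4C (p o2) (p o1))
  (dot4C (p o3) (p o0)) (dot4C (p o3) (p o1)) => h1 h2.
by split; lra.
Qed.

End Z2Symmetry.

Section Z2Gram.
Variables (R : comPzRingType) (a b c d : R).

Definition mx4_of_rows (rows : seq (seq R)) : 'M[R]_4 :=
  \matrix_(i, j) nth 0 (nth [::] rows i) j.

Definition Z2_gram : 'M[R]_4 :=
  mx4_of_rows [:: [:: 1; a; b; c]; [:: a; 1; c; b]; [:: b; c; 1; d]; [:: c; b; d; 1]].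

Definition Z2_gram_detp := (1 + a) * (1 + d) - (b + c) ^+ 2.
Definition Z2_gram_detm := (1 - a) * (1 - d) - (b - c) ^+ 2.

Local Notation Dp := Z2_gram_detp.
Local Notation Dm := Z2_gram_detm.

(* Obtained by inverting [Z2_gram] blockwise on span(e0 + e1, e2 + e3) and
   span(e0 - e1, e2 - e3), where it has determinants 4 Dp and 4 Dm. *)
Definition Z2_gram_dual : 'M[R]_4 :=
  let X0 := Dm * (1 + d) + Dp * (1 - d) in let Y0 := Dm * (1 + d) - Dp * (1 - d) in
  let X2 := Dm * (1 + a) + Dp * (1 - a) in let Y2 := Dm * (1 + a) - Dp * (1 - a) in
  let Z := - Dm * (b + c) - Dp * (b - c) in let Z' := - Dm * (b + c) + Dp * (b - c) in
  mx4_of_rows [:: [:: X0; Y0; Z; Z']; [:: Y0; X0; Z'; Z]; [:: Z; Z'; X2; Y2]; [:: Z'; Z; Y2; X2]].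

Lemma Z2_gram_dual_sym i j : Z2_gram_dual i j = Z2_gram_dual j i.
Proof.
by rewrite !mxE; have [->|[->|[->|->]]] := ord4P i; have [->|[->|[->|->]]] := ord4P j.
Qed.

Lemma mul_Z2_gram_dual : Z2_gram_dual *m Z2_gram = (2 * Dp * Dm)%:M.
Proof.
apply/matrixP => i j; rewrite !mxE sum4 !mxE.
by have [->|[->|[->|->]]] := ord4P i; have [->|[->|[->|->]]] := ord4P j;
  rewrite /= /Dp /Dm; ring.
Qed.

End Z2Gram.

Section DualBasis.
Variables (R : realType) (p v : 'I_4 -> 'rV[R]_4).
Hypotheses (p_vert : is_tetra_vertices p) (v_normal : outer_normals p v).
Hypotheses (gram02 : dot4 (p o0) (p o2) = dot4 (p o1) (p o3))
           (gram03 : dot4 (p o0) (p o3) = dot4 (p o1) (p o2)).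

Let a := dot4 (p o0) (p o1).
Let b := dot4 (p o0) (p o2).
Let c := dot4 (p o0) (p o3).
Let d := dot4 (p o2) (p o3).
Let Dp := Z2_gram_detp a b c d.
Let Dm := Z2_gram_detm a b c d.
Let K := 2 * Dp * Dm.
Let G := Z2_gram a b c d.
Let Q := Z2_gram_dual a b c d.

Lemma dot4_Z2_gram i j : dot4 (p i) (p j) = G i j.
Proof.
have p_unit := p_vert.1.
rewrite mxE; have [->|[->|[->|->]]] := ord4P i; have [->|[->|[->|->]]] := ord4P j;
  rewrite /= /a /b /c /d ?p_unit ?gram02 ?gram03 //; by rewrite dot4C ?gram02 ?gram03.
Qed.

Let q i := \sum_k Q i k *: p k.

Lemma dot4_dual i j : dot4 (q i) (p j) = K *+ (i == j).
Proof.
have := congr1 (fun M : 'M[R]_4 => M i j) (mul_Z2_gram_dual a b c d).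
rewrite !mxE => <-; rewrite dot4_suml.
by apply: eq_bigr => k _; rewrite dot4Zl dot4_Z2_gram.
Qed.

Lemma dot4_dualC i j : dot4 (q i) (q j) = K * Q i j.
Proof.
rewrite dot4C dot4_suml (bigD1 i) //= big1 => [|k ki].
  by rewrite dot4Zl dot4C dot4_dual eqxx mulr1n addr0 Z2_gram_dual_sym mulrC.
by rewrite dot4Zl dot4C dot4_dual eq_sym (negbTE ki) mulr0n mulr0.
Qed.

Lemma normal_dual i : K *: v i = dot4 (v i) (p i) *: q i.
Proof.
apply/eqP; rewrite -subr_eq0; apply/eqP; apply: (row_free_dot4_eq0 p_vert.2) => j.
rewrite dot4Bl !dot4Zl dot4_dual.
have [->|ji] := eqVneq j i; first by rewrite mulr1n mulrC subrr.
by rewrite (v_normal i).2.1 // mulr0n !mulr0 subrr.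
Qed.

Let p_free := row_free_free4 p_vert.2.

Lemma Z2_gram_detp_gt0 : 0 < Dp.
Proof.
have : dot4 (p o0 + p o1) (p o2 + p o3) ^+ 2 <
       dot4 (p o0 + p o1) (p o0 + p o1) * dot4 (p o2 + p o3) (p o2 + p o3).
  apply: dot4_cauchy_schwarz_lt => x y E.
  suff [x0 _ y0 _] : [/\ x = 0, x = 0, y = 0 & y = 0] by [].
  by apply: p_free; rewrite -E !scalerDr !addrA.
rewrite !(dot4Dl, dot4Dr) !dot4_Z2_gram !mxE /= /Dp /Z2_gram_detp; nra.
Qed.

Lemma Z2_gram_detm_gt0 : 0 < Dm.
Proof.
have : dot4 (p o0 - p o1) (p o2 - p o3) ^+ 2 <
       dot4 (p o0 - p o1) (p o0 - p o1) * dot4 (p o2 - p o3) (p o2 - p o3).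
  apply: dot4_cauchy_schwarz_lt => x y E.
  suff [x0 _ y0 _] : [/\ x = 0, - x = 0, y = 0 & - y = 0] by [].
  by apply: p_free; rewrite -E; apply/rowP => k; rewrite !mxE; ring.
rewrite !(dot4Bl, dot4Br) !dot4_Z2_gram !mxE /= /Dm /Z2_gram_detm; nra.
Qed.

Let K_gt0 : 0 < K.
Proof. by rewrite /K !pmulr_rgt0 ?Z2_gram_detp_gt0 ?Z2_gram_detm_gt0. Qed.

Lemma normals_dot4 i j :
  K * dot4 (v i) (v j) = dot4 (v i) (p i) * dot4 (v j) (p j) * Q i j.
Proof.
apply: (mulfI (lt0r_neq0 K_gt0)).
have -> : K * (K * dot4 (v i) (v j)) = dot4 (K *: v i) (K *: v j).
  by rewrite dot4Zl dot4Zr.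
by rewrite !normal_dual dot4Zl dot4Zr dot4_dualC; ring.
Qed.

Lemma normals_pair_dot4 i j : Q i i = Q j j ->
  0 < Q i i /\ dot4 (v i) (v j) * Q i i = Q i j.
Proof.
move=> Q_ij.
have [vi1 [_ vi_lt0]] := v_normal i; have [vj1 [_ vj_lt0]] := v_normal j.
have := normals_dot4 i i; have := normals_dot4 j j; have := normals_dot4 i j.
rewrite vi1 vj1 !mulr1 -Q_ij; move: vi_lt0 vj_lt0.
set li := dot4 (v i) (p i); set lj := dot4 (v j) (p j); set X := Q i i.
move=> li_lt0 lj_lt0 eij ej ei.
have X_gt0 : 0 < X by move: K_gt0; rewrite ei pmulr_rgt0 //; nra.
have lij : li = lj.
  have : li * li = lj * lj by apply: (mulIf (lt0r_neq0 X_gt0)); rewrite -ei -ej.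
  by nra.
split=> //; apply: (mulfI (lt0r_neq0 K_gt0)).
by rewrite mulrA eij ei lij; ring.
Qed.

Lemma sgr_normals_dot4B :
  Num.sg (dot4 (v o0) (v o1) - dot4 (v o2) (v o3)) = Num.sg (d - a).
Proof.
have [X0_gt0 v01] := @normals_pair_dot4 o0 o1 ltac:(by rewrite !mxE).
have [X2_gt0 v23] := @normals_pair_dot4 o2 o3 ltac:(by rewrite !mxE).
move: X0_gt0 X2_gt0 v01 v23; rewrite /Q !mxE /=.
set X0 := (X in 0 < X -> _); set X2 := (X in _ -> 0 < X -> _).
move=> X0_gt0 X2_gt0 v01 v23.
have gap : X0 * X2 * (dot4 (v o0) (v o1) - dot4 (v o2) (v o3)) = 4 * Dp * Dm * (d - a).
  transitivity (X2 * (dot4 (v o0) (v o1) * X0) - X0 * (dot4 (v o2) (v o3) * X2)); first ring.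
  by rewrite v01 v23 /X0 /X2 /Dp /Dm; ring.
move/(congr1 Num.sg): gap.
by rewrite !sgrM (gtr0_sg X0_gt0) (gtr0_sg X2_gt0) (gtr0_sg Z2_gram_detp_gt0)
  (gtr0_sg Z2_gram_detm_gt0) (@gtr0_sg _ 4) // !mul1r.
Qed.

End DualBasis.

Lemma ltr_acos (R : realType) : {in `[-1, 1] &, {mono @acos R : x y /~ y < x}}.
Proof.
have acos_in (x : R) : x \in `[-1, 1] -> acos x \in `[0, pi].
  by rewrite !in_itv /= => x1; rewrite acos_ge0 ?acos_lepi.
by move=> x y x1 y1; rewrite -(ltr_cos (acos_in _ y1) (acos_in _ x1)) !acosK.
Qed.

Lemma sgr_acosB (R : realType) (x y : R) : -1 <= x <= 1 -> -1 <= y <= 1 ->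
  Num.sg (acos x - acos y) = Num.sg (y - x).
Proof.
move=> x1 y1; have {x1 y1}[x1 y1] : x \in `[-1, 1] /\ y \in `[-1, 1] by rewrite !in_itv.
have [xy|yx|->] := ltgtP x y; last by rewrite !subrr.
- by rewrite !gtr0_sg ?subr_gt0 ?ltr_acos.
- by rewrite !ltr0_sg ?subr_lt0 ?ltr_acos.
Qed.

Lemma sgrB_cmp (R : realDomainType) (x y u w : R) : Num.sg (x - y) = Num.sg (u - w) ->
  (x = y <-> u = w) /\ (y < x <-> w < u).
Proof.
move=> sg_eq.
have eq_xy_uw : (x == y) = (u == w) by rewrite -subr_eq0 -sgr_eq0 sg_eq sgr_eq0 subr_eq0.
have lt_yx_wu : (y < x) = (w < u) by rewrite -subr_gt0 -sgr_gt0 sg_eq sgr_gt0 subr_gt0.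
by rewrite lt_yx_wu; split=> //; split=> /eqP; [rewrite eq_xy_uw | rewrite -eq_xy_uw] => /eqP.
Qed.

Theorem lemma1 (R : realType) (p v : 'I_4 -> 'rV[R]_4) :
  is_tetra_vertices p -> outer_normals p v -> Z2_symmetric p ->
  (l_A p = l_D p <-> ang_A v = ang_D v) /\
  (l_D p < l_A p <-> ang_A v < ang_D v).
Proof.
move=> p_vert v_normal [f [f_half f_tetra]].
have [gram02 gram03] := Z2_symmetric_gram p_vert f_half f_tetra.
have cos_bound i j := dot4_unit_bound (p_vert.1 i) (p_vert.1 j).
have ncos_bound i j : -1 <= - dot4 (v i) (v j) <= 1.
  have /andP[? ?] := dot4_unit_bound (v_normal i).1 (v_normal j).1.
  by apply/andP; split; lra.
have := sgr_normals_dot4B p_vert v_normal gram02 gram03.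
rewrite -(sgr_acosB (cos_bound o0 o1) (cos_bound o2 o3)).
have -> : dot4 (v o0) (v o1) - dot4 (v o2) (v o3) = - dot4 (v o2) (v o3) - - dot4 (v o0) (v o1).
  by rewrite opprK addrC.
rewrite -(sgr_acosB (ncos_bound o0 o1) (ncos_bound o2 o3)) => /esym/sgrB_cmp[eq_AD lt_AD].
rewrite /l_A /l_D /ang_A /ang_D /edge_len /dihedral.
by split=> //; apply: iff_trans eq_AD _; split=> ->.
Qed.
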